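(* Let $C$ be a nonempty subset of a Hilbert space $H$ and let $\mathcal{S}=\{T_s:s\in S\}$ be a representation of a semigroup $S$ on $C$. If $A_C(\mathcal{S})\neq\emptyset$, then $A_C(\mathcal{S})$ is closed and convex.
   Context: A representation is a family of maps $T_s:C\to C$ with $T_{st}=T_s\circ T_t$. $A_C(\mathcal{S})$ is the set of all $a\in H$ with $\|a-T_sx\|\le\|a-x\|$ for all $x\in C$ and $s\in S$. *)

From HB Require Import structures.
From mathcomp Require Import all_boot all_order all_algebra.
From mathcomp Require Import all_classical all_reals all_analysis.
Set Implicit Arguments. Unset Strict Implicit. Unset Printing Implicit Defensive.
Import Order.TTheory GRing.Theory Num.Theory.
Import numFieldNormedType.Exports.
Local Open Scope classical_set_scope.
Local Open Scope ring_scope.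

(* A (real) inner product on a normed module V whose norm it induces.
   A real Hilbert space is a complete normed module carrying such an
   inner product. *)
Definition is_inner_product (R : realType) (V : normedModType R)
    (ip : V -> V -> R) : Prop :=
  [/\ (forall x y : V, ip x y = ip y x),
      (forall (a : R) (x y z : V), ip (a *: x + y) z = a * ip x z + ip y z)
    & (forall x : V, `|x| ^+ 2 = ip x x)].

Definition semigroup_law (S : Type) (op : S -> S -> S) : Prop :=
  forall s t u, op s (op t u) = op (op s t) u.

Definition representation_on (S : Type) (op : S -> S -> S) (V : Type)
    (C : set V) (T : S -> V -> V) : Prop :=
  (forall s x, C x -> C (T s x)) /\
  (forall s t x, C x -> T (op s t) x = T s (T t x)).

Definition attractive_points (R : realType) (V : normedModType R) (S : Type)
    (C : set V) (T : S -> V -> V) : set V :=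
  [set a | forall x s, C x -> `|a - T s x| <= `|a - x|].

From HB Require Import structures.
From mathcomp Require Import all_boot all_order all_algebra.
From mathcomp Require Import all_classical all_reals all_analysis.
From mathcomp Require Import unstable ring lra.
Import Order.TTheory GRing.Theory Num.Theory.
Import numFieldNormedType.Exports.
Local Open Scope classical_set_scope.
Local Open Scope ring_scope.
Local Open Scope convex_scope.

(* A_C(S) is the intersection, over x in C and s in S, of the sets of points
   at least as close to T_s x as to x.  Each of them is closed by continuity of
   the norm, and in an inner product space it is the half-space
   {a | <w,w> - <v,v> <= 2 <a, w - v>}, hence convex. *)

Definition closer_to {R : numDomainType} {V : normedModType R} (w v : V) : set V :=
  [set a | `|a - w| <= `|a - v|].

Lemma closed_closer_to (R : realFieldType) (V : normedModType R) (w v : V) :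
  closed (closer_to w v).
Proof.
have -> : closer_to w v = (fun a => `|a - v| - `|a - w|) @^-1` [set r | 0 <= r].
  by apply/seteqP; split=> a /=; rewrite subr_ge0.
apply: preimage_closed; last exact: closed_ge.
move=> a _.
apply: cvgB; apply: cvg_norm; apply: cvgB;
  [exact: cvg_id | exact: cvg_cst | exact: cvg_id | exact: cvg_cst].
Qed.

Lemma convex_set_bigcap (R : numDomainType) (M : lmodType R) (I : Type)
    (D : set I) (F : I -> set (convex_lmodType M)) :
  (forall i, D i -> convex_set (F i)) -> convex_set (\bigcap_(i in D) F i).
Proof.
move=> convF x y l /[!inE] Fx Fy i Di.
by apply/set_mem/convF; rewrite ?inE; [|exact: Fx|exact: Fy].
Qed.

Section InnerProduct.
Variables (R : realType) (V : normedModType R) (ip : V -> V -> R).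
Hypothesis ipP : is_inner_product ip.

Lemma ipZDl a x y z : ip (a *: x + y) z = a * ip x z + ip y z.
Proof. by case: ipP. Qed.

Lemma ip0l z : ip 0 z = 0.
Proof. by have := ipZDl 1 0 0 z; rewrite scale1r addr0 mul1r; lra. Qed.

Lemma ipDl x y z : ip (x + y) z = ip x z + ip y z.
Proof. by rewrite -[x]scale1r ipZDl mul1r scale1r. Qed.

Lemma ipZl a x z : ip (a *: x) z = a * ip x z.
Proof. by rewrite -[a *: x]addr0 ipZDl ip0l addr0. Qed.

Lemma ipBl x y z : ip (x - y) z = ip x z - ip y z.
Proof. by rewrite ipDl -scaleN1r ipZl mulN1r. Qed.

Lemma ipBr x y z : ip z (x - y) = ip z x - ip z y.
Proof. by case: ipP => ipC _ _; rewrite ipC ipBl -!(ipC z). Qed.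

Lemma sqr_normB_subr a w v :
  `|a - w| ^+ 2 - `|a - v| ^+ 2 = ip w w - ip v v - 2 * ip a (w - v).
Proof.
by case: ipP => ipC _ normE; rewrite !normE !ipBl !ipBr (ipC w a) (ipC v a); ring.
Qed.

Lemma closer_toE w v :
  closer_to w v = [set a | ip w w - ip v v <= 2 * ip a (w - v)].
Proof.
have le_sqrE a : (`|a - w| <= `|a - v|) = (`|a - w| ^+ 2 - `|a - v| ^+ 2 <= 0).
  by rewrite subr_le0 ler_sqr ?nnegrE.
by rewrite /closer_to; apply/seteqP; split=> a /=; rewrite le_sqrE sqr_normB_subr; lra.
Qed.

Lemma convex_closer_to w v : convex_set (closer_to w v : set (convex_lmodType V)).
Proof.
rewrite closer_toE => a b l /[!inE] /= le_a le_b.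
rewrite [_ <| l |> _]/= ipDl !ipZl.
have split_l (k : R) : k = l%:num * k + l%:num.~ * k.
  by rewrite -mulrDl add_onemK mul1r.
rewrite mulrDr (mulrCA 2 l%:num) (mulrCA 2 l%:num.~) [X in X <= _]split_l.
by apply: lerD; apply: ler_wpM2l; rewrite // onem_ge0 // le1.
Qed.

End InnerProduct.

Lemma attractive_pointsE (R : realType) (V : normedModType R) (S : Type)
    (C : set V) (T : S -> V -> V) :
  attractive_points C T =
  \bigcap_(p in [set p : V * S | C p.1]) closer_to (T p.2 p.1) p.1.
Proof.
apply/seteqP; split=> a /= attr_a; first by move=> [x s] /= Cx; exact: attr_a.
by move=> x s Cx; exact: (attr_a (x, s)).
Qed.

Theorem lemma4p9 (R : realType) (H : completeNormedModType R)
    (ip : H -> H -> R) (hip : is_inner_product ip)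
    (S : Type) (op : S -> S -> S) (hS : semigroup_law op)
    (C : set H) (hC : C !=set0) (T : S -> H -> H)
    (hT : representation_on op C T) :
  attractive_points C T !=set0 ->
  closed (attractive_points C T) /\
  convex_set (attractive_points C T : set (convex_lmodType H)).
Proof.
move=> _; rewrite attractive_pointsE; split.
- by apply: closed_bigI => -[x s] _; exact: closed_closer_to.
- by apply: convex_set_bigcap => -[x s] _; exact: convex_closer_to hip _ _.
Qed.
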